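(* In the standard LLP setup, for every $N\ge1$ and every $s\in\Sigma^*$: $f^N_{cons}(s)\subseteq f^{N+1}_{cons}(s)$.
   Context: Standard LLP setup. $\Sigma=\Sigma_c\,\dot\cup\,\Sigma_{uc}$ is a finite alphabet partitioned into controllable and uncontrollable events. The plant $G$ has generated language $L(G)$ and marked language $L_m(G)$ with $L(G)=\overline{L_m(G)}$ ($\overline{M}$ = set of prefixes of strings in $M$). The legal language $K\subseteq L_m(G)$ satisfies $K=\overline{K}\cap L_m(G)$. For a prefix-closed $L$, $M$ is controllable w.r.t. $L$ if $\overline{M}\Sigma_{uc}\cap L\subseteq\overline{M}$. For a language $L$ and $s\in\Sigma^*$: $L/s=\{t: st\in L\}$; $L|_N=\{t\in L:|t|\le N\}$. $M^{\uparrow/s|_N}$ is the supremal sublanguage of $M$ controllable w.r.t. $L(G)/s|_N$. Conservative attitude: $f^N_{cons}(s)=[K/s|_{N-1}]^{\uparrow/s|_N}$. *)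

From mathcomp Require Import all_boot.
Set Implicit Arguments. Unset Strict Implicit. Unset Printing Implicit Defensive.

Definition lang (Sigma : Type) := seq Sigma -> Prop.

Section Lang.
Variable Sigma : Type.
Implicit Types (L M : lang Sigma) (s t : seq Sigma).

Definition lsub L M : Prop := forall t, L t -> M t.

Definition pclos M : lang Sigma := fun t => exists u, M (t ++ u).

Definition lquot L s : lang Sigma := fun t => L (s ++ t).

Definition ltrunc L (N : nat) : lang Sigma := fun t => L t /\ size t <= N.

(* M controllable w.r.t. L (uc = the uncontrollable events):
   \overline{M} Sigma_uc \cap L \subseteq \overline{M} *)
Definition controllable (uc : pred Sigma) M L : Prop :=
  forall t e, pclos M t -> uc e -> L (rcons t e) -> pclos M (rcons t e).

Definition supC (uc : pred Sigma) M L : lang Sigma :=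
  fun t => exists M', lsub M' M /\ controllable uc M' L /\ M' t.

Definition f_cons (uc : pred Sigma) (LG K : lang Sigma) (N : nat) s
  : lang Sigma :=
  supC uc (ltrunc (lquot K s) N.-1) (ltrunc (lquot LG s) N).
End Lang.

From mathcomp Require Import all_boot.

(* Every sublanguage M' of K/s|_{N-1} consists of strings of length at most
   N-1, hence so does its prefix closure.  A one-event extension of such a
   prefix has length at most N, so it belongs to L(G)/s|_{N+1} exactly when it
   belongs to L(G)/s|_N: controllability of M' w.r.t. the shorter horizon
   implies controllability w.r.t. the longer one.  Since moreover
   K/s|_{N-1} ⊆ K/s|_N, every witness of membership in f^N_cons(s) is also a
   witness for f^{N+1}_cons(s).

   The argument uses only N >= 1. *)

Set Implicit Arguments.
Unset Strict Implicit.
Unset Printing Implicit Defensive.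

Section Truncation.
Variable Sigma : Type.
Implicit Types (L M : lang Sigma) (t u : seq Sigma).

Lemma ltrunc_mono L n m : n <= m -> lsub (ltrunc L n) (ltrunc L m).
Proof. by move=> le_nm t [Lt le_tn]; split=> //; exact: leq_trans le_tn le_nm. Qed.

(* Every string of the prefix closure is no longer than some string of the
   language, so length bounds on M are inherited by its prefix closure. *)
Lemma pclos_size M t : pclos M t -> exists2 u, M u & size t <= size u.
Proof. by case=> u Mtu; exists (t ++ u); rewrite // size_cat leq_addr. Qed.

End Truncation.

Section Controllability.
Variables (Sigma : Type) (uc : pred Sigma).
Implicit Types (L M : lang Sigma).

(* If all strings of M are shorter than n, controllability w.r.t. L|_n
   already gives controllability w.r.t. any other truncation L|_m: the
   relevant one-event extensions of prefixes have length at most n. *)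
Lemma controllable_trunc_extend M L n m :
  (forall u, M u -> size u < n) ->
  controllable uc M (ltrunc L n) -> controllable uc M (ltrunc L m).
Proof.
move=> short ctrl t e Mt uce [Lte _]; apply: ctrl => //; split=> //.
have [u Mu le_tu] := pclos_size Mt.
by rewrite size_rcons; exact: leq_ltn_trans le_tu (short u Mu).
Qed.

Lemma supC_mono M1 M2 L1 L2 :
  lsub M1 M2 ->
  (forall M', lsub M' M1 -> controllable uc M' L1 -> controllable uc M' L2) ->
  lsub (supC uc M1 L1) (supC uc M2 L2).
Proof.
move=> sub12 ctrl12 t [M' [subM' [ctrlM' M't]]].
by exists M'; split; [move=> u /subM' /sub12 | split=> //; exact: ctrl12].
Qed.

End Controllability.

Theorem mainTheorem7 (Sigma : finType) (uc : pred Sigma)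
  (LG Lm K : lang Sigma)
  (hG : forall t, LG t <-> pclos Lm t)
  (hKm : lsub K Lm)
  (hK : forall t, K t <-> (pclos K t /\ Lm t))
  (N : nat) (hN : 1 <= N) (s : seq Sigma) :
  lsub (f_cons uc LG K N s) (f_cons uc LG K N.+1 s).
Proof.
apply: supC_mono.
-
  exact/ltrunc_mono/leq_pred.
- move=> M' subM'; apply: controllable_trunc_extend.
  by move=> u /subM' [_ le_u]; rewrite -(ltn_predK hN) ltnS.
Qed.
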